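(* Let $(L,\preceq,\bot,\top)$ be a bounded lattice with at least three elements and let $K_1,K_2$ be blocks of $L$. Then either $K_1\cap K_2$ is a block of $L$, or $K_1$ and $K_2$ are independent blocks of $L$.
   Context: For $k\in L$ let ${\uparrow}k=\{x\in L\mid k\preceq x\}$ and ${\downarrow}k=\{x\in L\mid x\preceq k\}$. A block of $L$ is a sublattice $K\subsetneq L$ (a proper subset) such that $K\setminus\{\bot,\top\}\neq\varnothing$ and $({\uparrow}k\cup{\downarrow}k)\setminus\{\bot,\top\}\subseteq K$ for every $k\in K\setminus\{\bot,\top\}$. Two blocks $K_1,K_2$ are independent if $K_1\cap K_2\subseteq\{\bot,\top\}$. *)

From mathcomp Require Import all_boot all_order.
Set Implicit Arguments. Unset Strict Implicit. Unset Printing Implicit Defensive.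
Import Order.TTheory.
Local Open Scope order_scope.

(* Subsets of a (possibly infinite) lattice are represented as predicates L -> Prop. *)
Section Blocks.
Context {d : Order.disp_t} {L : tbLatticeType d}.

Definition is_sublattice (K : L -> Prop) : Prop :=
  forall x y, K x -> K y -> K (x `&` y) /\ K (x `|` y).

Definition is_block (K : L -> Prop) : Prop :=
  [/\ is_sublattice K,
      (exists x : L, ~ K x),
      (exists k, [/\ K k, k <> \bot & k <> \top])
    & forall k, K k -> k <> \bot -> k <> \top ->
        forall x : L, (k <= x \/ x <= k) -> x <> \bot -> x <> \top -> K x].

Definition independent_blocks (K1 K2 : L -> Prop) : Prop :=
  forall x, K1 x -> K2 x -> x = \bot \/ x = \top.

End Blocks.

From mathcomp Require Import all_boot all_order.
From Stdlib Require Import Classical.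
Import Order.TTheory.
Local Open Scope order_scope.

(* The closure conditions defining a block are inherited by intersections, so
   the intersection of two blocks is a block as soon as it contains an element
   other than bot and top; if it contains none, the blocks are independent. *)

Section BlockIntersection.
Context {d : Order.disp_t} {L : tbLatticeType d}.
Implicit Types K : L -> Prop.

Lemma sublatticeI K1 K2 :
  is_sublattice K1 -> is_sublattice K2 -> is_sublattice (fun x => K1 x /\ K2 x).
Proof.
move=> s1 s2 x y [x1 x2] [y1 y2].
have [xy1 xy1'] := s1 x y x1 y1; have [xy2 xy2'] := s2 x y x2 y2.
by split; split.
Qed.

Lemma blockI K1 K2 : is_block K1 -> is_block K2 ->
  (exists k, [/\ K1 k /\ K2 k, k <> \bot & k <> \top]) ->
  is_block (fun x => K1 x /\ K2 x).
Proof.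
case=> s1 [z nK1z] _ c1 [s2 _ _ c2] inner.
split; [exact: sublatticeI | by exists z => -[] | exact: inner |].
move=> k [k1 k2] kb kt x kx xb xt.
by split; [exact: c1 k1 kb kt x kx xb xt | exact: c2 k2 kb kt x kx xb xt].
Qed.

Lemma independent_blocks_trivialI K1 K2 :
  ~ (exists k, [/\ K1 k /\ K2 k, k <> \bot & k <> \top]) ->
  independent_blocks K1 K2.
Proof.
move=> noinner x x1 x2.
case: (classic (x = \bot)) => [|xb]; first by left.
case: (classic (x = \top)) => [|xt]; first by right.
by case: noinner; exists x.
Qed.

End BlockIntersection.

Theorem proposition19 (d : Order.disp_t) (L : tbLatticeType d)
  (three : exists x y z : L, [/\ x <> y, y <> z & x <> z])
  (K1 K2 : L -> Prop) (hK1 : is_block K1) (hK2 : is_block K2) :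
  is_block (fun x => K1 x /\ K2 x) \/ independent_blocks K1 K2.
Proof.
case: (classic (exists k, [/\ K1 k /\ K2 k, k <> \bot & k <> \top])) => inner.
- by left; exact: blockI.
- by right; exact: independent_blocks_trivialI.
Qed.
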